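(* Let $\alpha\in[1,2]$, $n,m\ge1$, let $\omega=(\omega_1,\dots,\omega_n)$ be a weight vector with $\omega_j\ge0$, $\sum_j\omega_j=1$, and let $\rho_1,\dots,\rho_n$ be $m\times m$ density matrices. Then $$D_\alpha^\omega(\rho_1,\dots,\rho_n)\le H_\alpha(\omega),$$ where for $\alpha\neq1$, $H_\alpha(\omega)=\frac{1}{1-\alpha}\bigl(\sum_{j=1}^n\omega_j^\alpha-1\bigr)$ is the Tsallis entropy of $\omega$, and for $\alpha=1$, $H_1(\omega)=-\sum_j\omega_j\log\omega_j$ is its Shannon entropy (equivalently, $H_\alpha(\omega)=H_\alpha(\mathrm{diag}(\omega_1,\dots,\omega_n))$).
   Context: An $m\times m$ density matrix is a real symmetric positive semidefinite $m\times m$ matrix with trace $1$. For $\alpha\in(0,1)\cup(1,\infty)$, the quantum Tsallis entropy is $H_\alpha(\rho)=\frac{1}{1-\alpha}\bigl(\mathrm{tr}(\rho^\alpha)-1\bigr)$ ($\rho^\alpha$ via spectral decomposition); for $\alpha=1$, $H_1(\rho)=-\mathrm{tr}(\rho\log\rho)$ is the von Neumann entropy (with $0\log0=0$). The quantum Jensen–Tsallis divergence of density matrices $\rho_1,\dots,\rho_n$ with weights $\omega$ is $$D_\alpha^{\omega}(\rho_1,\dots,\rho_n)=H_\alpha\Bigl(\sum_{j=1}^n\omega_j\rho_j\Bigr)-\sum_{j=1}^n\omega_jH_\alpha(\rho_j).$$ *)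

(* classical reals (Rpower, ln). Matrices are nat -> nat -> R,
   only entries with indices < m are meaningful. *)
From Stdlib Require Import Reals Lra ClassicalEpsilon.
Open Scope R_scope.

Definition mat := nat -> nat -> R.

Fixpoint rsum (n : nat) (f : nat -> R) : R :=
  match n with
  | O => 0
  | S k => rsum k f + f k
  end.

Definition mtrace (m : nat) (A : mat) : R := rsum m (fun i => A i i).

Definition symmetric (m : nat) (A : mat) : Prop :=
  forall i j, (i < m)%nat -> (j < m)%nat -> A i j = A j i.

Definition psd (m : nat) (A : mat) : Prop :=
  forall x : nat -> R,
    0 <= rsum m (fun i => x i * rsum m (fun j => A i j * x j)).

Definition density (m : nat) (A : mat) : Prop :=
  symmetric m A /\ psd m A /\ mtrace m A = 1.

Definition orthogonal (m : nat) (U : mat) : Prop :=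
  forall i j, (i < m)%nat -> (j < m)%nat ->
    rsum m (fun k => U k i * U k j) = if Nat.eqb i j then 1 else 0.

Definition spectral_decomp (m : nat) (A : mat) (U : mat) (lam : nat -> R) : Prop :=
  orthogonal m U /\
  forall i j, (i < m)%nat -> (j < m)%nat ->
    A i j = rsum m (fun k => U i k * lam k * U j k).

Definition trace_fun (m : nat) (f : R -> R) (A : mat) : R :=
  epsilon (inhabits 0)
    (fun t => exists U lam, spectral_decomp m A U lam /\
                            t = rsum m (fun k => f (lam k))).

(* x^a for x >= 0, a > 0, with 0^a = 0 *)
Definition rpow (x a : R) : R := if Rlt_dec 0 x then Rpower x a else 0.

(* x log x with 0 log 0 = 0 (natural log) *)
Definition xlogx (x : R) : R := if Rlt_dec 0 x then x * ln x else 0.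

Definition tsallis_mat (alpha : R) (m : nat) (rho : mat) : R :=
  if Req_dec_T alpha 1 then - trace_fun m xlogx rho
  else (trace_fun m (fun x => rpow x alpha) rho - 1) / (1 - alpha).

Definition tsallis_vec (alpha : R) (n : nat) (w : nat -> R) : R :=
  if Req_dec_T alpha 1 then - rsum n (fun j => xlogx (w j))
  else (rsum n (fun j => rpow (w j) alpha) - 1) / (1 - alpha).

Definition mixture (n : nat) (w : nat -> R) (rho : nat -> mat) : mat :=
  fun i j => rsum n (fun k => w k * rho k i j).

Definition jt_div (alpha : R) (n m : nat) (w : nat -> R) (rho : nat -> mat) : R :=
  tsallis_mat alpha m (mixture n w rho)
  - rsum n (fun j => w j * tsallis_mat alpha m (rho j)).

(* Expanding every [rho_j] spectrally writes the mixture as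
   [sigma = sum_(j,k) w_j lam_jk u_jk u_jk^T] with unit vectors [u_jk].  The weights
   [w_j lam_jk] are then majorized by the spectrum of [sigma]: for every convex [f]
   with [f 0 = 0], [sum_(j,k) f (w_j lam_jk) <= tr f(sigma)].  For [f x = x log x] the
   left side is [sum_j w_j tr f(rho_j) + sum_j f(w_j)], which is the Shannon bound.
   For [f x = x^alpha] it is [sum_j w_j^alpha tr rho_j^alpha], and the Tsallis bound
   follows from [w_j^alpha <= w_j] and [tr rho_j^alpha <= 1]. *)

From Pilot Require Import Defs.
From Stdlib Require Import Reals Lra Lia ClassicalEpsilon.
From mathcomp Require all_boot all_order all_algebra complex spectral ring Rstruct.

Module RealSpectral.
Import all_boot all_order all_algebra complex spectral ring Rstruct.
Set Implicit Arguments. Unset Strict Implicit. Unset Printing Implicit Defensive.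
Import Order.TTheory GRing.Theory Num.Theory.
Local Open Scope ring_scope.

Section RealSymmetric.
Variable R : rcfType.

Definition orth_diagonalizable n (A : 'M[R]_n) :=
  exists P : 'M[R]_n, exists d : 'rV[R]_n,
    P *m P^T = 1%:M /\ A = P^T *m diag_mx d *m P.

Lemma sum_sqr_row_eq0 n (v : 'rV[R]_n) : (\sum_j v 0 j ^+ 2 == 0) = (v == 0).
Proof.
rewrite psumr_eq0 /=; last by move=> j _; rewrite sqr_ge0.
apply/allP/eqP => [H | ->]; last by move=> j _; rewrite mxE expr0n.
apply/matrixP => i j; rewrite ord1 [RHS]mxE.
by have := H j (mem_index_enum j); rewrite sqrf_eq0 => /eqP.
Qed.

Lemma row_mul_tr n (v : 'rV[R]_n) : (v *m v^T) 0 0 = \sum_j v 0 j ^+ 2.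
Proof. by rewrite mxE; apply: eq_bigr => j _; rewrite [v^T _ _]mxE expr2. Qed.

(* A real symmetric matrix is hermitian over [R[i]], whose spectrum is real. *)
Lemma sym_real_eigenvector n (A : 'M[R]_n.+1) : A^T = A ->
  exists a : R, exists2 v : 'rV_n.+1, v *m A = a *: v & v != 0.
Proof.
move=> sA.
pose Ac := map_mx (real_complex R) A.
have Ahs : Ac \is hermsymmx.
  apply: realsym_hermsym.
    apply/is_hermitianmxP; rewrite expr0 scale1r /=.
    by rewrite map_mx_id // map_trmx sA.
  by apply/mxOverP => i j; rewrite mxE; apply/complex_realP; exists (A i j).
have /orthomx_spectralP Aeq := hermitian_normalmx Ahs.
set P := spectralmx Ac in Aeq; set d := spectral_diag Ac in Aeq.
have Pu : P \in unitmx := spectral_unit Ac.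
have ev : eigenvalue Ac (d 0 0).
  apply/eigenvalueP; exists (row 0 P).
    have PA : P *m Ac = diag_mx d *m P by rewrite {1}Aeq !mulmxA mulmxV // mul1mx.
    by rewrite -row_mul PA row_mul row_diag_mx -scalemxAl -rowE.
  apply/negP => /eqP r0; move: Pu; rewrite unitmxE unitfE.
  rewrite (expand_det_row _ 0) big1 ?eqxx // => j _.
  by have := congr1 (fun M : 'M_(1, n.+1) => M 0 j) r0; rewrite !mxE => ->; rewrite mul0r.
have dr : d 0 0 \is Num.real.
  by move/mxOverP: (hermitian_spectral_diag_real Ahs) => /(_ 0 0).
exists (complex.Re (d 0 0)); apply/eigenvalueP.
move: ev; rewrite -[d 0 0]RRe_real // eigenvalue_root_char -map_char_poly fmorph_root.
by rewrite -eigenvalue_root_char.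
Qed.

Lemma householder_reflection k (u : 'rV[R]_k.+1) : u *m u^T = 1%:M ->
  exists H : 'M[R]_k.+1, [/\ H^T = H, H *m H = 1%:M & delta_mx 0 0 *m H = u].
Proof.
move=> uu.
set e : 'rV[R]_k.+1 := delta_mx 0 0.
have ee : e *m e^T = 1%:M.
  by rewrite trmx_delta mul_delta_mx; apply/matrixP => i j; rewrite !ord1 !mxE.
have [->|une] := eqVneq u e.
  by exists 1%:M; split; rewrite ?trmx1 ?mulmx1 ?mul1mx.
set w := u - e; set s := (w *m w^T) 0 0.
have ws : w *m w^T = s%:M by rewrite {1}[w *m w^T]mx11_scalar.
have eu : e *m u^T = u *m e^T.
  by apply/matrixP => i j; rewrite !ord1 !mxE; apply: eq_bigr => l _; rewrite !mxE mulrC.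
set t := (u *m e^T) 0 0.
have ut : u *m e^T = t%:M by rewrite {1}[u *m e^T]mx11_scalar.
have s2 : s = 2 - 2 * t.
  have := ws; rewrite /w linearB /= mulmxBl !mulmxBr uu ee eu ut.
  by move/matrixP=> /(_ 0 0); rewrite !mxE /= !mulr1n => <-; ring.
have s0 : s != 0.
  apply: contra une => /eqP s0.
  by rewrite -subr_eq0 -/w -sum_sqr_row_eq0 -row_mul_tr -/s s0.
set W := w^T *m w.
have WW : W *m W = s *: W.
  by rewrite /W mulmxA -[w^T *m w *m w^T]mulmxA ws mul_mx_scalar -scalemxAl.
exists (1%:M - (2 / s) *: W); split.
- by rewrite linearB /= trmx1 linearZ /= /W trmx_mul trmxK.
- rewrite mulmxBl !mulmxBr !mul1mx mulmx1 -!scalemxAl -!scalemxAr WW !scalerA.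
  have -> : 2 / s * (2 / s) * s = 2 / s + 2 / s by field.
  by rewrite scalerDl opprB addrK subrK.
- rewrite mulmxBr mulmx1 -scalemxAr /W mulmxA.
  have -> : e *m w^T = (t - 1)%:M by rewrite /w linearB /= mulmxBr ee eu ut raddfB.
  rewrite mul_scalar_mx scalerA.
  have -> : 2 / s * (t - 1) = - 1 by rewrite s2; field; rewrite -s2.
  by rewrite scaleN1r opprK /w addrC subrK.
Qed.

Lemma orth_diagonalizable_deflate n (B : 'M[R]_(1 + n)) a :
  B^T = B -> row 0 B = a *: delta_mx 0 0 -> orth_diagonalizable (drsubmx B) ->
  orth_diagonalizable B.
Proof.
move=> sB rB [P [d [PP Beq]]].
have rB' j : B 0 j = a * (j == 0)%:R.
  by have := congr1 (fun M : 'rV_(1+n) => M 0 j) rB; rewrite !mxE eqxx eq_sym.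
have l0 : lshift n (0 : 'I_1) = 0 by apply/val_inj.
have ul : ulsubmx B = a%:M.
  by apply/matrixP => p q; rewrite !ord1 !mxE l0 rB' eqxx mulr1n mulr1.
have ur : ursubmx B = 0.
  apply/matrixP => p q; rewrite !ord1 !mxE l0 rB'.
  have -> : (rshift 1 q == 0) = false by apply/negbTE; rewrite -val_eqE.
  by rewrite mulr0.
have dl : dlsubmx B = 0 by rewrite -sB -trmx_ursub ur trmx0.
exists (block_mx 1%:M 0 0 P), (row_mx a%:M d); split.
  rewrite tr_block_mx !trmx0 trmx1 mulmx_block !mul1mx !mul0mx !mulmx0 !addr0 !add0r PP.
  by rewrite -scalar_mx_block.
rewrite -[B]submxK ul ur dl Beq diag_mx_row tr_block_mx !trmx0 trmx1 !mulmx_block.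
rewrite !mul1mx !mul0mx !mulmx0 !mulmx1 !addr0 !add0r mul0mx; congr block_mx.
by apply/matrixP => p q; rewrite !ord1 !mxE.
Qed.

(* Conjugating by the Householder reflection sending [e_0] to a unit eigenvector
   makes the first row [a e_0]; then recurse on the lower-right block. *)
Theorem sym_orth_diagonalizable n (A : 'M[R]_n) : A^T = A -> orth_diagonalizable A.
Proof.
elim: n A => [|n IH] A sA.
  exists 1%:M, 0; split; first by rewrite trmx1 mulmx1.
  by apply/matrixP => [[]].
have [a [v vA vn0]] := sym_real_eigenvector sA.
set c := (v *m v^T) 0 0.
have c0 : 0 < c.
  rewrite /c row_mul_tr lt_def sum_sqr_row_eq0 vn0 /=.
  by rewrite sumr_ge0 // => j _; rewrite sqr_ge0.
set u := (Num.sqrt c)^-1 *: v.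
have uu : u *m u^T = 1%:M.
  rewrite /u linearZ /= -scalemxAl -scalemxAr scalerA -expr2 exprVn sqr_sqrtr ?ltW //.
  by rewrite {1}[v *m v^T]mx11_scalar -/c scale_scalar_mx mulVf // gt_eqF.
have uA : u *m A = a *: u by rewrite /u -scalemxAl vA !scalerA mulrC.
have [H [sH HH eH]] := householder_reflection uu.
set B : 'M_(1 + n) := H *m A *m H.
have sB : B^T = B by rewrite /B !trmx_mul sA sH mulmxA.
have rB : row 0 B = a *: delta_mx 0 0.
  by rewrite rowE /B !mulmxA eH uA -scalemxAl -eH -mulmxA HH mulmx1.
have sB' : (drsubmx B)^T = drsubmx B by rewrite trmx_drsub sB.
have [Q [d [QQ Beq]]] := orth_diagonalizable_deflate sB rB (IH _ sB').
exists (Q *m H), d; split.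
  by rewrite trmx_mul sH mulmxA -(mulmxA Q) HH mulmx1 QQ.
have -> : A = H *m B *m H by rewrite /B !mulmxA HH mul1mx -mulmxA HH mulmx1.
by rewrite Beq trmx_mul sH !mulmxA.
Qed.

End RealSymmetric.

Lemma rsum_bigop n (f : nat -> R) : rsum n f = \sum_(i < n) f i.
Proof. by elim: n => [|n IH]; rewrite ?big_ord0 // big_ord_recr /= -IH. Qed.

Lemma symmetric_spectral_decomp m (A : mat) :
  Defs.symmetric m A -> exists U lam, spectral_decomp m A U lam.
Proof.
case: m => [|m] sA.
  by exists (fun _ _ => 0%R), (fun _ => 0%R); split => i j /Nat.nlt_0_r.
pose M := \matrix_(i < m.+1, j < m.+1) A i j.
have sM : M^T = M by apply/matrixP => i j; rewrite !mxE; apply: sA; apply/ssrnat.ltP.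
have [P [d [PP Meq]]] := sym_orth_diagonalizable sM.
exists (fun i k => P (inord k) (inord i)), (fun k => d 0 (inord k)); split.
  move=> i j /ssrnat.ltP hi /ssrnat.ltP hj; rewrite rsum_bigop.
  have := congr1 (fun X : 'M_m.+1 => X (inord i) (inord j)) PP; rewrite !mxE => E.
  rewrite (eq_bigr (fun k => P (inord i) k * P^T k (inord j))); last first.
    by move=> k _; rewrite inord_val mxE.
  rewrite E; case: (Nat.eqb_spec i j) => [->|hij]; first by rewrite eqxx.
  rewrite (_ : inord i == inord j :> 'I_m.+1 = false) //.
  by apply/negbTE/eqP => /(congr1 val) /=; rewrite !inordK.
move=> i j /ssrnat.ltP hi /ssrnat.ltP hj.
have := congr1 (fun X : 'M_m.+1 => X (inord i) (inord j)) Meq.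
rewrite mul_mx_diag !mxE !inordK // => ->.
by rewrite rsum_bigop; apply: eq_bigr => k _; rewrite inord_val !mxE.
Qed.

End RealSpectral.

Open Scope R_scope.

Lemma rsum_ext n f g : (forall k, (k < n)%nat -> f k = g k) -> rsum n f = rsum n g.
Proof.
  induction n as [|n IH]; intros H; simpl; auto.
  rewrite IH by (intros; apply H; lia). rewrite (H n) by lia. reflexivity.
Qed.

Lemma rsum_plus n f g : rsum n (fun k => f k + g k) = rsum n f + rsum n g.
Proof. induction n; simpl; [lra|]. rewrite IHn; lra. Qed.

Lemma rsum_minus n f g : rsum n (fun k => f k - g k) = rsum n f - rsum n g.
Proof. induction n; simpl; [lra|]. rewrite IHn; lra. Qed.

Lemma rsum_mult_l n c f : rsum n (fun k => c * f k) = c * rsum n f.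
Proof. induction n; simpl; [lra|]. rewrite IHn; lra. Qed.

Lemma rsum_mult_r n c f : rsum n (fun k => f k * c) = rsum n f * c.
Proof. induction n; simpl; [lra|]. rewrite IHn; lra. Qed.

Lemma rsum_const0 n : rsum n (fun _ => 0) = 0.
Proof. induction n; simpl; lra. Qed.

Lemma rsum_eq0 n f : (forall k, (k < n)%nat -> f k = 0) -> rsum n f = 0.
Proof. intros H; rewrite (rsum_ext n f (fun _ => 0)) by auto; apply rsum_const0. Qed.

Lemma rsum_comm n m (f : nat -> nat -> R) :
  rsum n (fun i => rsum m (fun j => f i j)) = rsum m (fun j => rsum n (fun i => f i j)).
Proof.
  induction n as [|n IH]; simpl.
  - symmetry; apply rsum_const0.
  - rewrite IH, <- rsum_plus; reflexivity.
Qed.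

Lemma rsum_split n1 n2 f :
  rsum (n1 + n2) f = rsum n1 f + rsum n2 (fun k => f (n1 + k)%nat).
Proof.
  induction n2 as [|n2 IH]; simpl; [rewrite Nat.add_0_r; lra|].
  rewrite Nat.add_succ_r; simpl; rewrite IH; lra.
Qed.

Lemma rsum_flatten n m (F : nat -> nat -> R) :
  rsum n (fun j => rsum m (fun k => F j k)) = rsum (n * m) (fun i => F (i / m) (i mod m))%nat.
Proof.
  induction n as [|n IH]; simpl; [reflexivity|].
  rewrite IH, Nat.add_comm, rsum_split; f_equal.
  apply rsum_ext; intros k Hk.
  rewrite <- (Nat.div_unique (n * m + k) m n k), <- (Nat.mod_unique (n * m + k) m n k)
    by lia; reflexivity.
Qed.

Lemma rsum_nonneg n f : (forall k, (k < n)%nat -> 0 <= f k) -> 0 <= rsum n f.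
Proof.
  induction n; simpl; intros H; [lra|].
  assert (0 <= rsum n f) by (apply IHn; intros; apply H; lia).
  assert (0 <= f n) by (apply H; lia). lra.
Qed.

Lemma rsum_le n f g : (forall k, (k < n)%nat -> f k <= g k) -> rsum n f <= rsum n g.
Proof.
  induction n; simpl; intros H; [lra|].
  assert (rsum n f <= rsum n g) by (apply IHn; intros; apply H; lia).
  assert (f n <= g n) by (apply H; lia). lra.
Qed.

Lemma rsum_term_le n f l :
  (forall k, (k < n)%nat -> 0 <= f k) -> (l < n)%nat -> f l <= rsum n f.
Proof.
  induction n; simpl; intros H Hl; [lia|].
  assert (0 <= f n) by (apply H; lia).
  destruct (Nat.eq_dec l n) as [->|Hne].
  - assert (0 <= rsum n f) by (apply rsum_nonneg; intros; apply H; lia). lra.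
  - assert (f l <= rsum n f) by (apply IHn; [intros; apply H|]; lia). lra.
Qed.

Lemma rsum_nonneg_eq0 n f l :
  (forall k, (k < n)%nat -> 0 <= f k) -> rsum n f = 0 -> (l < n)%nat -> f l = 0.
Proof.
  intros H Hs Hl.
  pose proof (rsum_term_le n f l H Hl). pose proof (H l Hl). lra.
Qed.

Lemma rsum_delta n (f : nat -> R) l : (l < n)%nat ->
  rsum n (fun k => f k * (if Nat.eqb k l then 1 else 0)) = f l.
Proof.
  induction n as [|n IH]; simpl; intros Hl; [lia|].
  destruct (Nat.eq_dec l n) as [->|Hne].
  - rewrite Nat.eqb_refl, rsum_eq0; [lra|].
    intros k Hk; destruct (Nat.eqb_spec k n); [lia|ring].
  - rewrite IH by lia. destruct (Nat.eqb_spec n l); [lia|ring].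
Qed.

Definition dot m (x y : nat -> R) : R := rsum m (fun a => x a * y a).
Definition quad m (A : mat) (y : nat -> R) : R :=
  rsum m (fun a => y a * rsum m (fun b => A a b * y b)).
Definition col (U : mat) k : nat -> R := fun a => U a k.
Definition lincomb m (h : nat -> R) (V : mat) : nat -> R :=
  fun a => rsum m (fun l => h l * V a l).

Lemma dot_comm m x y : dot m x y = dot m y x.
Proof. unfold dot. apply rsum_ext; intros; ring. Qed.

Lemma dot_minus_l m x y z : dot m (fun a => x a - y a) z = dot m x z - dot m y z.
Proof. unfold dot. rewrite <- rsum_minus. apply rsum_ext; intros; ring. Qed.

Lemma dot_lincomb_l m h V z :
  dot m (lincomb m h V) z = rsum m (fun l => h l * dot m (col V l) z).
Proof.
  unfold dot, lincomb, col.
  transitivity (rsum m (fun a => rsum m (fun l => h l * (V a l * z a)))).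
  - apply rsum_ext; intros a Ha. rewrite <- rsum_mult_r. apply rsum_ext; intros; ring.
  - rewrite rsum_comm. apply rsum_ext; intros l Hl. apply rsum_mult_l.
Qed.

Lemma dot_lincomb_orthogonal m h V l : orthogonal m V -> (l < m)%nat ->
  dot m (lincomb m h V) (col V l) = h l.
Proof.
  intros HV Hl. rewrite dot_lincomb_l, <- (rsum_delta m h l Hl).
  apply rsum_ext; intros k Hk. unfold dot, col. rewrite HV by auto. reflexivity.
Qed.

Lemma quad_spectral m A U lam y : spectral_decomp m A U lam ->
  quad m A y = rsum m (fun k => lam k * (dot m y (col U k))^2).
Proof.
  intros [_ HA]. unfold quad, dot, col.
  transitivity (rsum m (fun a => rsum m (fun b =>
                  rsum m (fun k => lam k * (y a * U a k) * (y b * U b k))))).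
  - apply rsum_ext; intros a Ha. rewrite <- rsum_mult_l. apply rsum_ext; intros b Hb.
    rewrite HA by auto. rewrite <- rsum_mult_r, <- rsum_mult_l. apply rsum_ext; intros; ring.
  - rewrite rsum_comm.
    transitivity (rsum m (fun b => rsum m (fun k =>
                    rsum m (fun a => lam k * (y a * U a k) * (y b * U b k))))).
    + apply rsum_ext; intros b Hb. apply rsum_comm.
    + rewrite rsum_comm. apply rsum_ext; intros k Hk. rewrite rsum_comm.
      rewrite (rsum_ext m _ (fun a => lam k * (y a * U a k) * rsum m (fun b => y b * U b k)))
        by (intros; apply rsum_mult_l).
      rewrite rsum_mult_r, rsum_mult_l. ring.
Qed.

Lemma quad_spectral_col m A U lam l : spectral_decomp m A U lam -> (l < m)%nat ->
  quad m A (col U l) = lam l.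
Proof.
  intros HD Hl. pose proof HD as [HU _].
  rewrite (quad_spectral _ _ _ _ _ HD), <- (rsum_delta m lam l Hl).
  apply rsum_ext; intros k Hk.
  rewrite dot_comm. unfold dot, col. rewrite HU by auto.
  destruct (Nat.eqb k l); ring.
Qed.

Lemma spectral_psd_nonneg m A U lam l :
  spectral_decomp m A U lam -> psd m A -> (l < m)%nat -> 0 <= lam l.
Proof. intros HD HA Hl. rewrite <- (quad_spectral_col _ _ _ _ _ HD Hl). apply HA. Qed.

Lemma mtrace_spectral m A U lam : spectral_decomp m A U lam -> mtrace m A = rsum m lam.
Proof.
  intros [HU HA]. unfold mtrace.
  rewrite (rsum_ext m _ (fun i => rsum m (fun k => lam k * (U i k * U i k))))
    by (intros; rewrite HA by auto; apply rsum_ext; intros; ring).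
  rewrite rsum_comm. apply rsum_ext; intros k Hk.
  rewrite rsum_mult_l, HU, Nat.eqb_refl by auto. ring.
Qed.

(* Since [/ 0 = 0] in Stdlib, this holds without excluding [x = 0]. *)
Lemma Rinv_nonneg x : 0 <= x -> 0 <= / x.
Proof.
  intros Hx. destruct (Req_dec x 0) as [->|Hx0]; [rewrite Rinv_0; lra|].
  left; apply Rinv_0_lt_compat; lra.
Qed.

Definition supported_at (f : R -> R) (x : R) : Prop :=
  exists d, forall t, 0 <= t -> f x + d * (t - x) <= f t.

Lemma jensen_substochastic (f : R -> R) x N (p t : nat -> R) :
  f 0 = 0 -> supported_at f x ->
  (forall l, (l < N)%nat -> 0 <= p l) -> (forall l, (l < N)%nat -> 0 <= t l) ->
  rsum N (fun l => p l * t l) = x -> rsum N p <= 1 ->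
  f x <= rsum N (fun l => p l * f (t l)).
Proof.
  intros f0 [d Hd] Hp Ht Hx Hs.
  assert (Hline : rsum N (fun l => p l * (f x + d * (t l - x))) <= rsum N (fun l => p l * f (t l))).
  { apply rsum_le; intros l Hl. apply Rmult_le_compat_l; auto. }
  assert (Eline : rsum N (fun l => p l * (f x + d * (t l - x))) =
                  rsum N p * (f x - d * x) + d * rsum N (fun l => p l * t l)).
  { rewrite <- rsum_mult_r, <- rsum_mult_l, <- rsum_plus. apply rsum_ext; intros; ring. }
  (* the supporting line at [x] evaluated at [0] gives [f x - d x <= 0] *)
  assert (H0 : f x + d * (0 - x) <= f 0) by (apply Hd; lra).
  assert (0 <= rsum N p) by (apply rsum_nonneg; auto).
  rewrite Hx in Eline. nra.
Qed.

(* The matrix [p i l = g_i <u_i, v_l>^2 / s_l] has column sums [1] (or [0] when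
   [s_l = 0]), row sums at most [1], and maps [s] to [g]; Jensen along its rows
   gives the majorization. *)
Section FrameMajorization.
Variables (m N : nat) (A V : mat) (s g : nat -> R) (u : nat -> nat -> R).
Hypothesis spectral_A : spectral_decomp m A V s.
Hypothesis g_nonneg : forall i, (i < N)%nat -> 0 <= g i.
Hypothesis u_unit : forall i, (i < N)%nat -> dot m (u i) (u i) = 1.
Hypothesis quad_A : forall y, quad m A y = rsum N (fun i => g i * (dot m y (u i))^2).

Let overlap i l := (dot m (u i) (col V l))^2.

Lemma frame_term_le_quad y i : (i < N)%nat -> g i * (dot m y (u i))^2 <= quad m A y.
Proof.
  intros Hi. rewrite quad_A. apply (rsum_term_le N (fun i => g i * (dot m y (u i))^2));
    [intros k Hk; apply Rmult_le_pos; [auto|apply pow2_ge_0] | exact Hi].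
Qed.

Lemma eigenvalue_frame_sum l : (l < m)%nat -> s l = rsum N (fun i => g i * overlap i l).
Proof.
  intros Hl. rewrite <- (quad_spectral_col _ _ _ _ _ spectral_A Hl), quad_A.
  apply rsum_ext; intros i Hi. unfold overlap. rewrite dot_comm. reflexivity.
Qed.

Lemma overlap_weight_nonneg i l : (i < N)%nat -> 0 <= g i * overlap i l.
Proof. intros Hi. apply Rmult_le_pos; [auto|apply pow2_ge_0]. Qed.

Lemma eigenvalue_frame_nonneg l : (l < m)%nat -> 0 <= s l.
Proof.
  intros Hl. rewrite eigenvalue_frame_sum by exact Hl.
  apply rsum_nonneg; intros; apply overlap_weight_nonneg; auto.
Qed.

Lemma overlap_weight_eq0 i l : (i < N)%nat -> (l < m)%nat -> s l = 0 -> g i * overlap i l = 0.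
Proof.
  intros Hi Hl Hs. rewrite eigenvalue_frame_sum in Hs by exact Hl.
  exact (rsum_nonneg_eq0 N _ i (fun k Hk => overlap_weight_nonneg k l Hk) Hs Hi).
Qed.

(* Parseval for [u i]: its residual [r] after projecting onto the eigenbasis is
   invisible to the quadratic form, and [0 < g i] forces [r] orthogonal to [u i]. *)
Lemma overlap_total i : (i < N)%nat -> 0 < g i -> rsum m (overlap i) = 1.
Proof.
  intros Hi Hg. destruct spectral_A as [HV _].
  set (c := fun l => dot m (u i) (col V l)).
  set (r := fun a => u i a - lincomb m c V a).
  assert (Hr : quad m A r = 0).
  { rewrite (quad_spectral _ _ _ _ _ spectral_A). apply rsum_eq0; intros l Hl.
    unfold r. rewrite dot_minus_l, dot_lincomb_orthogonal by auto. unfold c. ring. }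
  pose proof (frame_term_le_quad r i Hi) as Hle. rewrite Hr in Hle.
  assert (Hru : dot m r (u i) = 0).
  { pose proof (pow2_ge_0 (dot m r (u i))). apply Rsqr_0_uniq. unfold Rsqr. nra. }
  unfold r in Hru. rewrite dot_minus_l, dot_lincomb_l, u_unit in Hru by exact Hi.
  unfold overlap. rewrite (rsum_ext m _ (fun l => c l * dot m (col V l) (u i)))
    by (intros; unfold c; rewrite (dot_comm m (col V _)); ring).
  lra.
Qed.

(* Test the quadratic form on [y = sum_l (c_l / s_l) v_l] with [c_l = <u i, v_l>]:
   both [quad A y] and [<y, u i>] equal [P = sum_l c_l^2 / s_l], so [g i P^2 <= P]. *)
Lemma overlap_inv_weight_le i : (i < N)%nat ->
  g i * rsum m (fun l => overlap i l / s l) <= 1.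
Proof.
  intros Hi. destruct spectral_A as [HV _].
  set (P := rsum m (fun l => overlap i l / s l)).
  set (h := fun l => dot m (u i) (col V l) / s l).
  set (y := lincomb m h V).
  assert (Hq : quad m A y = P).
  { rewrite (quad_spectral _ _ _ _ _ spectral_A). apply rsum_ext; intros l Hl.
    unfold y. rewrite dot_lincomb_orthogonal by auto. unfold h, overlap.
    destruct (Req_dec (s l) 0) as [E|E]; [rewrite E; unfold Rdiv; rewrite Rinv_0; ring|].
    field; exact E. }
  assert (Hyu : dot m y (u i) = P).
  { unfold y. rewrite dot_lincomb_l. apply rsum_ext; intros l Hl. unfold h, overlap.
    rewrite (dot_comm m (col V l)). unfold Rdiv. ring. }
  assert (HP : 0 <= P).
  { apply rsum_nonneg; intros l Hl. apply Rmult_le_pos; [apply pow2_ge_0|].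
    apply Rinv_nonneg, eigenvalue_frame_nonneg; exact Hl. }
  pose proof (frame_term_le_quad y i Hi) as Hle. rewrite Hq, Hyu in Hle.
  pose proof (g_nonneg i Hi).
  destruct (Req_dec P 0) as [E|E]; [rewrite E; lra|].
  apply (Rmult_le_reg_r P); [lra|]. nra.
Qed.

Let p i l := g i * overlap i l / s l.

Lemma p_nonneg i l : (i < N)%nat -> (l < m)%nat -> 0 <= p i l.
Proof.
  intros Hi Hl. apply Rmult_le_pos; [apply overlap_weight_nonneg; exact Hi|].
  apply Rinv_nonneg, eigenvalue_frame_nonneg; exact Hl.
Qed.

Variable f : R -> R.
Hypothesis f0 : f 0 = 0.
Hypothesis f_supported : forall x, 0 < x -> supported_at f x.

Lemma frame_weight_jensen i : (i < N)%nat -> f (g i) <= rsum m (fun l => p i l * f (s l)).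
Proof.
  intros Hi. destruct (Req_dec (g i) 0) as [E|E].
  - rewrite E, f0, rsum_eq0; [lra|]. intros l Hl. unfold p. rewrite E. unfold Rdiv. ring.
  - pose proof (g_nonneg i Hi).
    apply jensen_substochastic; auto using eigenvalue_frame_nonneg, p_nonneg.
    + apply f_supported; lra.
    + rewrite <- (Rmult_1_r (g i)), <- (overlap_total i Hi) by lra.
      rewrite <- rsum_mult_l. apply rsum_ext; intros l Hl. unfold p.
      destruct (Req_dec (s l) 0) as [Es|Es].
      * rewrite Es, overlap_weight_eq0 by auto. unfold Rdiv. ring.
      * field; exact Es.
    + eapply Rle_trans; [|apply (overlap_inv_weight_le i Hi)].
      right. rewrite <- rsum_mult_l. apply rsum_ext; intros. unfold p, Rdiv. ring.
Qed.

Theorem frame_majorization : rsum N (fun i => f (g i)) <= rsum m (fun l => f (s l)).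
Proof.
  eapply Rle_trans; [apply rsum_le; intros i Hi; apply (frame_weight_jensen i Hi)|].
  right. rewrite rsum_comm. apply rsum_ext; intros l Hl.
  rewrite rsum_mult_r. unfold p, Rdiv. rewrite rsum_mult_r, <- eigenvalue_frame_sum by exact Hl.
  destruct (Req_dec (s l) 0) as [E|E]; [rewrite E, f0; ring|].
  rewrite Rinv_r by exact E. ring.
Qed.

End FrameMajorization.

Lemma quad_mixture n m w rho y :
  quad m (mixture n w rho) y = rsum n (fun j => w j * quad m (rho j) y).
Proof.
  unfold quad, mixture.
  transitivity (rsum m (fun a => rsum n (fun j => rsum m (fun b => w j * (y a * (rho j a b * y b)))))).
  - apply rsum_ext; intros a Ha. rewrite rsum_comm, <- rsum_mult_l.
    apply rsum_ext; intros b Hb. rewrite <- rsum_mult_r, <- rsum_mult_l.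
    apply rsum_ext; intros; ring.
  - rewrite rsum_comm. apply rsum_ext; intros j Hj.
    rewrite <- rsum_mult_l. apply rsum_ext; intros a Ha.
    rewrite <- rsum_mult_l, <- rsum_mult_l. apply rsum_ext; intros; ring.
Qed.

Lemma mixture_symmetric n m w rho : (forall j, (j < n)%nat -> Defs.symmetric m (rho j)) ->
  Defs.symmetric m (mixture n w rho).
Proof. intros H i j Hi Hj. apply rsum_ext; intros k Hk. rewrite H; auto. Qed.

Lemma flat_index_lt n m i : (i < n * m)%nat -> (i / m < n)%nat /\ (i mod m < m)%nat.
Proof.
  intros Hi. split; [apply Nat.Div0.div_lt_upper_bound; lia|].
  apply Nat.mod_upper_bound. intros ->. lia.
Qed.

Lemma mixture_majorization n m w rho Us lams V s f :
  f 0 = 0 -> (forall x, 0 < x -> supported_at f x) ->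
  (forall j, (j < n)%nat -> 0 <= w j) ->
  (forall j, (j < n)%nat -> spectral_decomp m (rho j) (Us j) (lams j)) ->
  (forall j k, (j < n)%nat -> (k < m)%nat -> 0 <= lams j k) ->
  spectral_decomp m (mixture n w rho) V s ->
  rsum n (fun j => rsum m (fun k => f (w j * lams j k))) <= rsum m (fun l => f (s l)).
Proof.
  intros f0 Hf Hw HU Hlam HV. rewrite rsum_flatten.
  apply (frame_majorization m (n * m) (mixture n w rho) V s
           (fun i => w (i / m)%nat * lams (i / m)%nat (i mod m)%nat)
           (fun i => col (Us (i / m)%nat) (i mod m)%nat)); auto.
  - intros i Hi. destruct (flat_index_lt n m i Hi).
    apply Rmult_le_pos; auto.
  - intros i Hi. destruct (flat_index_lt n m i Hi). unfold dot, col.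
    destruct (HU (i / m)%nat) as [HO _]; auto.
    rewrite HO, Nat.eqb_refl by auto. reflexivity.
  - intros y.
    rewrite quad_mixture, <- (rsum_flatten n m (fun j k => w j * lams j k * (dot m y (col (Us j) k))^2)).
    apply rsum_ext; intros j Hj.
    rewrite (quad_spectral _ _ _ _ _ (HU j Hj)), <- rsum_mult_l.
    apply rsum_ext; intros; ring.
Qed.

Lemma trace_fun_spectral m f A : Defs.symmetric m A ->
  exists U lam, spectral_decomp m A U lam /\ trace_fun m f A = rsum m (fun k => f (lam k)).
Proof.
  intros HA. destruct (RealSpectral.symmetric_spectral_decomp HA) as [U [lam HD]].
  unfold trace_fun. apply (epsilon_spec (inhabits 0)). exists (rsum m (fun k => f (lam k))), U, lam. auto.
Qed.

Lemma trace_fun_spectral_family n m f (rho : nat -> mat) :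
  (forall j, (j < n)%nat -> Defs.symmetric m (rho j)) ->
  exists Us lams, forall j, (j < n)%nat ->
    spectral_decomp m (rho j) (Us j) (lams j) /\
    trace_fun m f (rho j) = rsum m (fun k => f (lams j k)).
Proof.
  intros Hs.
  destruct (choice (fun j (Ul : mat * (nat -> R)) => (j < n)%nat ->
              spectral_decomp m (rho j) (fst Ul) (snd Ul) /\
              trace_fun m f (rho j) = rsum m (fun k => f (snd Ul k)))) as [F HF].
  - intros j. destruct (Nat.lt_ge_cases j n) as [Hj|Hj].
    + destruct (trace_fun_spectral m f (rho j) (Hs j Hj)) as [U [lam HUl]].
      exists (U, lam). auto.
    + exists ((fun _ _ => 0), (fun _ => 0)). intros; lia.
  - exists (fun j => fst (F j)), (fun j => snd (F j)). exact HF.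
Qed.

Lemma trace_fun_mixture_lower_bound n m w rho f :
  f 0 = 0 -> (forall x, 0 < x -> supported_at f x) ->
  (forall j, (j < n)%nat -> 0 <= w j) ->
  (forall j, (j < n)%nat -> density m (rho j)) ->
  exists lams : nat -> nat -> R,
    (forall j, (j < n)%nat ->
       (forall k, (k < m)%nat -> 0 <= lams j k) /\ rsum m (lams j) = 1 /\
       trace_fun m f (rho j) = rsum m (fun k => f (lams j k))) /\
    rsum n (fun j => rsum m (fun k => f (w j * lams j k))) <= trace_fun m f (mixture n w rho).
Proof.
  intros f0 Hf Hw Hd.
  assert (Hsym : forall j, (j < n)%nat -> Defs.symmetric m (rho j)) by (apply Hd).
  destruct (trace_fun_spectral_family n m f rho Hsym) as [Us [lams HU]].
  destruct (trace_fun_spectral m f (mixture n w rho) (mixture_symmetric n m w rho Hsym))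
    as [V [s [HV ->]]].
  assert (Hlam : forall j k, (j < n)%nat -> (k < m)%nat -> 0 <= lams j k).
  { intros j k Hj Hk. apply (spectral_psd_nonneg m (rho j) (Us j)); [apply HU|apply Hd|]; auto. }
  exists lams. split.
  - intros j Hj. destruct (HU j Hj) as [HD HT]. repeat split; auto.
    rewrite <- (mtrace_spectral m (rho j) (Us j)); [apply Hd|]; auto.
  - apply (mixture_majorization n m w rho Us lams V s f); auto. apply HU.
Qed.

Lemma ln_le_sub1 u : 0 < u -> ln u <= u - 1.
Proof. intros Hu. pose proof (exp_ineq1_le (ln u)). rewrite exp_ln in H; lra. Qed.

Lemma tlnt_gap x t : 0 < x -> 0 < t -> t - x <= t * (ln t - ln x).
Proof.
  intros Hx Ht. assert (Hxt : 0 < x / t) by (apply Rdiv_lt_0_compat; auto).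
  pose proof (ln_le_sub1 (x / t) Hxt) as H.
  unfold Rdiv in H. rewrite ln_mult, ln_Rinv in H by auto using Rinv_0_lt_compat.
  assert (t * (x * / t) = x) by (field; lra). nra.
Qed.

Lemma xlogx_0 : xlogx 0 = 0.
Proof. unfold xlogx. destruct (Rlt_dec 0 0); lra. Qed.

Lemma xlogx_supported x : 0 < x -> supported_at xlogx x.
Proof.
  intros Hx. exists (ln x + 1). intros t Ht. unfold xlogx.
  destruct (Rlt_dec 0 x) as [_|]; [|lra].
  destruct (Rlt_dec 0 t) as [Ht'|].
  - pose proof (tlnt_gap x t Hx Ht'). nra.
  - replace t with 0 by lra. lra.
Qed.

Lemma rpow_0 alpha : rpow 0 alpha = 0.
Proof. unfold rpow. destruct (Rlt_dec 0 0); lra. Qed.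

Lemma Rpower_succ_pred x alpha : 0 < x -> Rpower x alpha = Rpower x (alpha - 1) * x.
Proof.
  intros Hx. replace alpha with ((alpha - 1) + 1) at 1 by ring.
  rewrite Rpower_plus, Rpower_1 by auto. ring.
Qed.

Lemma exp_tangent a b : exp a * (1 + (b - a)) <= exp b.
Proof.
  pose proof (exp_ineq1_le (b - a)). pose proof (exp_pos a).
  replace b with (a + (b - a)) at 2 by ring. rewrite exp_plus. nra.
Qed.

(* For [t > 0], [exp_tangent] at [a = ln t + (alpha-1) ln x], [b = alpha ln t]
   gives [t^alpha >= t x^(alpha-1) (1 + (alpha-1)(ln t - ln x))]; conclude with [tlnt_gap]. *)
Lemma rpow_supported alpha x : 1 <= alpha -> 0 < x -> supported_at (fun t => rpow t alpha) x.
Proof.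
  intros Hal Hx. exists (alpha * Rpower x (alpha - 1)). intros t Ht. unfold rpow.
  destruct (Rlt_dec 0 x) as [_|]; [|lra].
  rewrite (Rpower_succ_pred x alpha Hx).
  assert (Px : 0 < Rpower x (alpha - 1)) by apply exp_pos.
  destruct (Rlt_dec 0 t) as [Ht'|].
  - pose proof (exp_tangent (ln t + (alpha - 1) * ln x) (alpha * ln t)) as Hexp.
    rewrite exp_plus, exp_ln in Hexp by exact Ht'.
    change (exp ((alpha - 1) * ln x)) with (Rpower x (alpha - 1)) in Hexp.
    change (exp (alpha * ln t)) with (Rpower t alpha) in Hexp.
    pose proof (tlnt_gap x t Hx Ht').
    assert ((alpha - 1) * (t - x) <= (alpha - 1) * (t * (ln t - ln x)))
      by (apply Rmult_le_compat_l; lra).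
    assert (Rpower x (alpha - 1) * ((alpha - 1) * (t - x))
            <= Rpower x (alpha - 1) * ((alpha - 1) * (t * (ln t - ln x))))
      by (apply Rmult_le_compat_l; lra).
    nra.
  - replace t with 0 by lra.
    assert (0 <= Rpower x (alpha - 1) * x * (alpha - 1)) by (apply Rmult_le_pos; nra). lra.
Qed.

Lemma xlogx_mult a b : 0 <= a -> 0 <= b -> xlogx (a * b) = a * xlogx b + b * xlogx a.
Proof.
  intros Ha Hb. unfold xlogx.
  destruct (Rlt_dec 0 a) as [Ha'|Ha']; [|replace a with 0 by lra; rewrite Rmult_0_l;
    destruct (Rlt_dec 0 0); lra].
  destruct (Rlt_dec 0 b) as [Hb'|Hb']; [|replace b with 0 by lra; rewrite Rmult_0_r;
    destruct (Rlt_dec 0 0); lra].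
  destruct (Rlt_dec 0 (a * b)) as [_|Hab]; [rewrite ln_mult by auto; ring|].
  exfalso; apply Hab, Rmult_lt_0_compat; auto.
Qed.

Lemma rpow_mult a b alpha : 0 <= a -> 0 <= b -> rpow (a * b) alpha = rpow a alpha * rpow b alpha.
Proof.
  intros Ha Hb. unfold rpow.
  destruct (Rlt_dec 0 a) as [Ha'|Ha']; [|replace a with 0 by lra; rewrite Rmult_0_l;
    destruct (Rlt_dec 0 0); lra].
  destruct (Rlt_dec 0 b) as [Hb'|Hb']; [|replace b with 0 by lra; rewrite Rmult_0_r;
    destruct (Rlt_dec 0 0); lra].
  destruct (Rlt_dec 0 (a * b)) as [_|Hab]; [symmetry; apply Rpower_mult_distr; auto|].
  exfalso; apply Hab, Rmult_lt_0_compat; auto.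
Qed.

Lemma rpow_le_id x alpha : 1 <= alpha -> 0 <= x <= 1 -> rpow x alpha <= x.
Proof.
  intros Hal Hx. unfold rpow. destruct (Rlt_dec 0 x) as [Hx'|]; [|lra].
  rewrite (Rpower_succ_pred x alpha Hx').
  assert (Rpower x (alpha - 1) <= 1).
  { unfold Rpower. apply Rle_trans with (exp 0); [|rewrite exp_0; lra].
    destruct (Req_dec ((alpha - 1) * ln x) 0) as [E|E]; [rewrite E; lra|].
    left; apply exp_increasing. pose proof (ln_le_sub1 x Hx'). nra. }
  nra.
Qed.

Section ScaledSpectrum.
Variables (m : nat) (c : R) (lam : nat -> R).
Hypothesis c_nonneg : 0 <= c.
Hypothesis lam_nonneg : forall k, (k < m)%nat -> 0 <= lam k.
Hypothesis lam_sum : rsum m lam = 1.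

Lemma xlogx_scaled_sum :
  rsum m (fun k => xlogx (c * lam k)) = c * rsum m (fun k => xlogx (lam k)) + xlogx c.
Proof.
  rewrite (rsum_ext m _ (fun k => c * xlogx (lam k) + lam k * xlogx c))
    by (intros; apply xlogx_mult; auto).
  rewrite rsum_plus, rsum_mult_l, rsum_mult_r, lam_sum. ring.
Qed.

Lemma rpow_scaled_sum alpha :
  rsum m (fun k => rpow (c * lam k) alpha) = rpow c alpha * rsum m (fun k => rpow (lam k) alpha).
Proof. rewrite <- rsum_mult_l. apply rsum_ext; intros. apply rpow_mult; auto. Qed.

Lemma rpow_sum_le1 alpha : 1 <= alpha -> rsum m (fun k => rpow (lam k) alpha) <= 1.
Proof.
  intros Hal. rewrite <- lam_sum. apply rsum_le; intros k Hk. apply rpow_le_id; auto.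
  split; auto. rewrite <- lam_sum. apply rsum_term_le; auto.
Qed.

End ScaledSpectrum.

Lemma jt_von_neumann_le_shannon n m w rho :
  (forall j, (j < n)%nat -> 0 <= w j) -> (forall j, (j < n)%nat -> density m (rho j)) ->
  - trace_fun m xlogx (mixture n w rho) - rsum n (fun j => w j * - trace_fun m xlogx (rho j))
    <= - rsum n (fun j => xlogx (w j)).
Proof.
  intros Hw Hd.
  destruct (trace_fun_mixture_lower_bound n m w rho xlogx xlogx_0 xlogx_supported Hw Hd)
    as [lams [Hlams Hle]].
  rewrite (rsum_ext n _ (fun j => w j * trace_fun m xlogx (rho j) + xlogx (w j))) in Hle.
  - rewrite rsum_plus in Hle.
    rewrite (rsum_ext n _ (fun j => -1 * (w j * trace_fun m xlogx (rho j))))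
      by (intros; ring).
    rewrite rsum_mult_l. lra.
  - intros j Hj. destruct (Hlams j Hj) as [Hl [Hs ->]]. apply xlogx_scaled_sum; auto.
Qed.

(* The entropy gap reduces to [sum_j (w_j^alpha - w_j) (tr rho_j^alpha - 1) >= 0],
   a sum of products of two nonpositive factors. *)
Lemma jt_tsallis_le_tsallis alpha n m w rho :
  1 < alpha -> (forall j, (j < n)%nat -> 0 <= w j) -> rsum n w = 1 ->
  (forall j, (j < n)%nat -> density m (rho j)) ->
  (trace_fun m (fun x => rpow x alpha) (mixture n w rho) - 1) / (1 - alpha)
  - rsum n (fun j => w j * ((trace_fun m (fun x => rpow x alpha) (rho j) - 1) / (1 - alpha)))
  <= (rsum n (fun j => rpow (w j) alpha) - 1) / (1 - alpha).
Proof.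
  intros Hal Hw Hsw Hd.
  destruct (trace_fun_mixture_lower_bound n m w rho (fun x => rpow x alpha) (rpow_0 alpha)
              (fun x => rpow_supported alpha x (Rlt_le _ _ Hal)) Hw Hd) as [lams [Hlams Hle]].
  set (T := fun j => trace_fun m (fun x => rpow x alpha) (rho j)).
  rewrite (rsum_ext n _ (fun j => rpow (w j) alpha * T j)) in Hle
    by (intros j Hj; destruct (Hlams j Hj) as [Hl [Hs HT]];
        unfold T; rewrite HT; apply rpow_scaled_sum; auto).
  assert (Hgap : 0 <= rsum n (fun j => (rpow (w j) alpha - w j) * (T j - 1))).
  { apply rsum_nonneg; intros j Hj. destruct (Hlams j Hj) as [Hl [Hs HT]].
    assert (T j <= 1) by (unfold T; rewrite HT; apply rpow_sum_le1; auto; lra).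
    assert (w j <= 1) by (rewrite <- Hsw; apply rsum_term_le; auto).
    pose proof (rpow_le_id (w j) alpha (Rlt_le _ _ Hal) (conj (Hw j Hj) H0)). nra. }
  rewrite (rsum_ext n _ (fun j => rpow (w j) alpha * T j - w j * T j - rpow (w j) alpha + w j))
    in Hgap by (intros; ring).
  rewrite !rsum_plus, !rsum_minus, Hsw in Hgap.
  rewrite (rsum_ext n _ (fun j => (w j * T j - w j) * / (1 - alpha))) by (intros; unfold T, Rdiv; ring).
  rewrite rsum_mult_r, rsum_minus, Hsw.
  assert (HK : / (1 - alpha) < 0) by (apply Rinv_lt_0_compat; lra).
  unfold Rdiv. fold T. nra.
Qed.

Theorem proposition4 (alpha : R) (n m : nat) (w : nat -> R) (rho : nat -> mat) :
  1 <= alpha <= 2 -> (1 <= n)%nat -> (1 <= m)%nat ->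
  (forall j, (j < n)%nat -> 0 <= w j) -> rsum n w = 1 ->
  (forall j, (j < n)%nat -> density m (rho j)) ->
  jt_div alpha n m w rho <= tsallis_vec alpha n w.
Proof.
  intros Hal _ _ Hw Hsw Hd. unfold jt_div, tsallis_mat, tsallis_vec.
  destruct (Req_dec_T alpha 1) as [_|Hne].
  - apply jt_von_neumann_le_shannon; auto.
  - apply jt_tsallis_le_tsallis; auto. lra.
Qed.
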